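(* If $\Delta\geq 4$, then the symmetric directed star satisfies $\chi'_{D_2}(\overleftrightarrow{K_{1,\Delta}})=\left\lceil 2\sqrt{\Delta}\right\rceil$.
   Context: For a simple graph $G$, the symmetric digraph $\overleftrightarrow{G}$ is obtained by replacing each edge $uv$ of $G$ by the pair of opposite arcs $\overrightarrow{uv}$ and $\overrightarrow{vu}$. A monochromatic 2-path is a pair of arcs $\overrightarrow{uv},\overrightarrow{vw}$ with $w\neq u$ of the same colour. An arc-colouring is distinguishing if the only automorphism of $\overleftrightarrow{G}$ preserving the colour of every arc is the identity. $\chi'_{D_2}(\overleftrightarrow{G})$ is the least number of colours in a distinguishing arc-colouring of $\overleftrightarrow{G}$ with no monochromatic 2-paths (monochromatic 2-cycles are allowed). *)

From mathcomp Require Import all_boot all_order all_algebra all_fingroup all_field.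
Set Implicit Arguments. Unset Strict Implicit. Unset Printing Implicit Defensive.

(* A simple graph on a finite vertex type T is given by a symmetric,
   irreflexive relation e. The symmetric digraph <->G has arc set
   { (u,v) | e u v } (both orientations of each edge). *)
Definition simple_graph (T : finType) (e : rel T) :=
  symmetric e /\ irreflexive e.

Definition digraph_aut (T : finType) (e : rel T) (s : {perm T}) :=
  forall u v, e (s u) (s v) = e u v.

(* An arc colouring with (at most) k colours: a colour for each ordered
   pair; only the values on arcs (u,v) with e u v matter. *)
Definition arc_colouring (T : finType) (k : nat) := T -> T -> 'I_k.

Definition no_mono_2path (T : finType) (e : rel T) k (c : arc_colouring T k) :=
  forall u v w, e u v -> e v w -> w != u -> c u v != c v w.

Definition distinguishing (T : finType) (e : rel T) k (c : arc_colouring T k) :=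
  forall s : {perm T}, digraph_aut e s ->
    (forall u v, e u v -> c (s u) (s v) = c u v) -> s = 1%g.

Definition D2_colourable (T : finType) (e : rel T) (k : nat) :=
  exists c : arc_colouring T k, no_mono_2path e c /\ distinguishing e c.

Definition chiD2_is (T : finType) (e : rel T) (m : nat) :=
  D2_colourable e m /\ forall k, D2_colourable e k -> m <= k.

(* The star K_{1,D}: vertex set 'I_D.+1, centre ord0, leaves 1..D. *)
Definition star_rel (D : nat) : rel 'I_D.+1 :=
  fun u v => (u == ord0) != (v == ord0).
Arguments star_rel D : clear implicits.

From mathcomp Require Import all_boot all_order all_algebra all_fingroup all_field.
From mathcomp Require Import zify.
Import Order.TTheory GRing.Theory Num.Theory.

(* An arc colouring c of the star is read off the leaves: leaf i has the
   in-colour c(i,0) and the out-colour c(0,i).  Having no monochromatic 2-path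
   i -> 0 -> j says that the in-colour of a leaf is never the out-colour of
   another leaf; as every transposition of two leaves is an automorphism,
   being distinguishing says that distinct leaves carry distinct colour pairs.
   Hence a leaf whose in-colour is an out-colour has equal in- and
   out-colours, used by no other leaf, while every other leaf has an in-colour
   that is no out-colour and an out-colour that is no in-colour.  Counting the
   x, a, b colours of these three kinds gives Δ <= x + ab and x + a + b <= k,
   whence 4Δ <= k^2 by AM-GM once Δ >= 4.  Conversely, floor(k/2) in-colours
   and ceil(k/2) out-colours give floor(k^2/4) >= Δ distinct pairs when
   4Δ <= k^2, and the centre, the only vertex of degree at least 2, is fixed
   by every automorphism.  Finally ceil(2√Δ) is the least k with 4Δ <= k^2. *)

Set Implicit Arguments.
Unset Strict Implicit.
Unset Printing Implicit Defensive.

Lemma sqr_sum_ge x a b : 4 <= x + a * b -> 4 * (x + a * b) <= (x + a + b) ^ 2.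
Proof. have [AGM _] := nat_AGM2 a b; case: (leqP (a + b) 1); nia. Qed.

Lemma half_add_uphalf m : m./2 + uphalf m = m.
Proof. by rewrite uphalf_half -[RHS]odd_double_half -addnn; lia. Qed.

Lemma leq_half_mul_uphalf n m : 4 * n <= m ^ 2 -> n <= m./2 * uphalf m.
Proof. rewrite -{1}[m]half_add_uphalf uphalf_half; case: (odd m); nia. Qed.

Lemma exists_inj_on (T U : finType) (A : {pred T}) (u0 : U) :
  #|A| <= #|U| -> exists f : T -> U, {in A &, injective f}.
Proof.
move=> le_AU; exists (fun x => nth u0 (enum U) (index x (enum A))).
have idx_lt x : x \in A -> index x (enum A) < size (enum U).
  by rewrite -mem_enum -index_mem -cardE => /leq_trans; apply; rewrite -cardE.
move=> x y Ax Ay /eqP; rewrite nth_uniq ?idx_lt ?enum_uniq // => /eqP eq_idx.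
by rewrite -(nth_index x (_ : x \in enum A)) ?mem_enum // eq_idx nth_index ?mem_enum.
Qed.

Lemma inj_in_leq_card (T U : finType) (f : T -> U) (A : {set T}) (B : {set U}) :
  {in A &, injective f} -> {in A, forall x, f x \in B} -> #|A| <= #|B|.
Proof.
move=> f_inj f_AB; rewrite -(card_in_imset f_inj); apply: subset_leq_card.
by apply/subsetP => _ /imsetP[x Ax ->]; apply: f_AB.
Qed.

Lemma cardsU_ID (T : finType) (A B : {set T}) :
  #|A :|: B| = #|A :&: B| + #|A :\: B| + #|B :\: A|.
Proof.
have := cardsUI A B; have := cardsID B A; have := cardsID A B.
by rewrite (setIC B A); lia.
Qed.

Section Star.

Variable D : nat.
Implicit Types (u v : 'I_D.+1) (s : {perm 'I_D.+1}).

Definition leaves : {set 'I_D.+1} := [set~ ord0].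

Lemma in_leaves v : (v \in leaves) = (v != ord0).
Proof. by rewrite in_setC1. Qed.

Lemma card_leaves : #|leaves| = D.
Proof. by rewrite cardsC1 card_ord. Qed.

Lemma star_rel0l v : star_rel D ord0 v = (v \in leaves).
Proof. by rewrite in_leaves /star_rel eqxx; case: (v == ord0). Qed.

Lemma star_rel0r u : star_rel D u ord0 = (u \in leaves).
Proof. by rewrite in_leaves /star_rel eqxx; case: (u == ord0). Qed.

Lemma star_rel_leafl u v : u \in leaves -> star_rel D u v = (v == ord0).
Proof. by rewrite in_leaves /star_rel => /negbTE ->; case: (v == ord0). Qed.

Lemma star_rel_leafr u v : v \in leaves -> star_rel D u v = (u == ord0).
Proof. by rewrite in_leaves /star_rel => /negbTE ->; case: (u == ord0). Qed.

Lemma star_aut_centre s : 2 <= D -> digraph_aut (star_rel D) s -> s ord0 = ord0.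
Proof.
move=> D_ge2 s_aut; apply/eqP; apply: contraT; rewrite -in_leaves => s0_leaf.
have leaf_to_centre v : v \in leaves -> s v = ord0.
  move=> v_leaf; apply/eqP; rewrite -(star_rel_leafl (s v) s0_leaf).
  by rewrite s_aut star_rel0l.
have leaf k : 0 < k <= D -> (inord k : 'I_D.+1) \in leaves.
  by move=> k_range; rewrite in_leaves -val_eqE /= inordK; lia.
have /perm_inj/(congr1 val) : s (inord 1) = s (inord 2).
  by rewrite !leaf_to_centre ?leaf //; lia.
by rewrite /= !inordK; lia.
Qed.

Section Colouring.

Variables (k : nat) (c : arc_colouring 'I_D.+1 k).

Lemma star_no_mono_2pathP :
  no_mono_2path (star_rel D) c <->
  {in leaves &, forall i j, c i ord0 = c ord0 j -> i = j}.
Proof.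
split=> [c_nm i j i_leaf j_leaf c_ij | c_leaf u v w].
  apply/eqP; apply: contraT => ne_ij.
  move: (c_nm i ord0 j); rewrite star_rel0r star_rel0l c_ij eqxx (eq_sym j).
  by move=> /(_ i_leaf j_leaf ne_ij).
case: (eqVneq v ord0) => [-> | ]; last rewrite -in_leaves => v_leaf.
  rewrite star_rel0r star_rel0l => u_leaf w_leaf ne_wu.
  by apply: contra_neq ne_wu => /(c_leaf _ _ u_leaf w_leaf) ->.
rewrite (star_rel_leafr u v_leaf) (star_rel_leafl w v_leaf).
by move=> /eqP-> /eqP->; rewrite eqxx.
Qed.

Lemma star_distinguishingP : 2 <= D ->
  distinguishing (star_rel D) c <->
  {in leaves &, injective (fun i => (c i ord0, c ord0 i))}.
Proof.
move=> D_ge2; split=> [c_dist i j i_leaf j_leaf [c_in c_out] | c_inj s s_aut s_col].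
  move: i_leaf j_leaf; rewrite !in_leaves => i0 j0.
  have tperm_centre : tperm i j ord0 = ord0 by rewrite tpermD // eq_sym.
  have tperm_aut : digraph_aut (star_rel D) (tperm i j).
    have fix_centre u : (tperm i j u == ord0) = (u == ord0).
      by rewrite -{1}tperm_centre (inj_eq perm_inj).
    by move=> u v; rewrite /star_rel !fix_centre.
  have tperm_col u v : star_rel D u v -> c (tperm i j u) (tperm i j v) = c u v.
    case: (eqVneq u ord0) => [-> | u0].
      by rewrite tperm_centre; case: tpermP => [->|->|] //; rewrite c_out.
    rewrite star_rel_leafl ?in_leaves // => /eqP->.
    by rewrite tperm_centre; case: tpermP => [->|->|] //; rewrite c_in.
  move/(congr1 (fun s => s i)): (c_dist _ tperm_aut tperm_col).
  by rewrite tpermL perm1.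
have s0 := star_aut_centre D_ge2 s_aut.
apply/permP => u; rewrite perm1.
case: (eqVneq u ord0) => [-> // | ]; rewrite -in_leaves => u_leaf.
have su_leaf : s u \in leaves by rewrite in_leaves -s0 (inj_eq perm_inj) -in_leaves.
apply: c_inj => //.
move: (s_col u ord0) (s_col ord0 u); rewrite s0 star_rel0r star_rel0l u_leaf.
by move=> /(_ isT) -> /(_ isT) ->.
Qed.

Definition in_colours := [set c i ord0 | i in leaves].
Definition out_colours := [set c ord0 i | i in leaves].

Section Counting.

Hypothesis c_leaf : {in leaves &, forall i j, c i ord0 = c ord0 j -> i = j}.
Hypothesis c_inj : {in leaves &, injective (fun i => (c i ord0, c ord0 i))}.

Lemma in_colour_mem_out_eq i :
  i \in leaves -> c i ord0 \in out_colours -> c ord0 i = c i ord0.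
Proof.
by move=> i_leaf /imsetP[l l_leaf c_il]; rewrite c_il (c_leaf i_leaf l_leaf c_il).
Qed.

Lemma out_colour_mem_in i :
  i \in leaves -> c ord0 i \in in_colours -> c i ord0 \in out_colours.
Proof.
move=> i_leaf /imsetP[l l_leaf c_li].
by rewrite -(c_leaf l_leaf i_leaf (esym c_li)) -c_li imset_f.
Qed.

Lemma card_leaves_le_colours :
  #|leaves| <= #|in_colours :&: out_colours|
                + #|in_colours :\: out_colours| * #|out_colours :\: in_colours|.
Proof.
rewrite -(cardsID [set i | c i ord0 \in out_colours] leaves) -cardsX.
apply: leq_add.
  apply: (@inj_in_leq_card _ _ (fun i => c i ord0)).
    move=> i j /setIP[i_leaf i_diag] /setIP[j_leaf j_diag] c_ij.
    rewrite inE in i_diag; rewrite inE in j_diag.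
    by apply: c_inj; rewrite //= !in_colour_mem_out_eq // c_ij.
  move=> i /setIP[i_leaf]; rewrite inE => i_diag.
  by rewrite in_setI i_diag imset_f.
apply: inj_in_leq_card.
  by move=> i j /setDP[i_leaf _] /setDP[j_leaf _]; apply: c_inj.
move=> i /setDP[i_leaf]; rewrite inE => i_ndiag.
rewrite in_setX !in_setD i_ndiag !imset_f //= andbT.
by apply: contra i_ndiag; apply: out_colour_mem_in.
Qed.

End Counting.

End Colouring.

Lemma star_D2_colourable_leq_sqr k :
  4 <= D -> D2_colourable (star_rel D) k -> 4 * D <= k ^ 2.
Proof.
move=> D_ge4 [c [/star_no_mono_2pathP c_leaf]].
have D_ge2 : 2 <= D by lia.
move=> /(star_distinguishingP c D_ge2) c_inj.
have := card_leaves_le_colours c_leaf c_inj; rewrite card_leaves.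
have := max_card (in_colours c :|: out_colours c); rewrite cardsU_ID card_ord.
move=> le_k le_D; apply: leq_trans (leq_mul (leqnn 4) le_D) _.
by apply: leq_trans (sqr_sum_ge _) _; [lia | rewrite leq_sqr].
Qed.

Lemma star_D2_colourable_of_leq_mul a b :
  2 <= D -> D <= a * b -> D2_colourable (star_rel D) (a + b).
Proof.
move=> D_ge2 le_D_ab.
have [a_gt0 b_gt0] : 0 < a /\ 0 < b by split; nia.
have le_card : #|leaves| <= #|{: 'I_a * 'I_b}|.
  by rewrite card_leaves card_prod !card_ord.
have [f f_inj] := exists_inj_on (Ordinal a_gt0, Ordinal b_gt0) le_card.
pose c : arc_colouring 'I_D.+1 (a + b) := fun u v =>
  if v == ord0 then lshift b (f u).1 else rshift a (f v).2.
exists c; split.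
  apply/star_no_mono_2pathP => i j _; rewrite in_leaves /c eqxx => /negbTE->.
  by move=> /(congr1 val) /= eq_ij; have := ltn_ord (f i).1; rewrite eq_ij ltnNge leq_addr.
apply/(star_distinguishingP c D_ge2) => i j i_leaf j_leaf.
move: (i_leaf) (j_leaf); rewrite !in_leaves /c eqxx => /negbTE-> /negbTE->.
move=> -[/val_inj f1 /addnI/val_inj f2].
by apply: f_inj => //; apply: injective_projections.
Qed.

End Star.

Local Open Scope ring_scope.

Lemma ceil_sqrt_bounds (R : archiNumDomainType) (x : R) (n m : nat) :
  0 <= x -> x ^+ 2 = n%:R -> (0 < n)%N -> m%:Z = Num.ceil x ->
  ((m.-1) ^ 2 < n <= m ^ 2)%N.
Proof.
move=> x_ge0 x2 n_gt0 m_ceil.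
have [lt_x le_x] := andP (real_ceil_itv (ger0_real x_ge0)).
rewrite -m_ceil in lt_x le_x.
have m_gt0 : (0 < m)%N.
  case: m {m_ceil lt_x} le_x => // le_x0.
  have : x ^+ 2 <= 0 by rewrite expr2 mulr_ge0_le0.
  by rewrite x2 lern0 => /eqP; lia.
rewrite -(ltr_nat R) -(ler_nat R) !natrX -x2.
rewrite ltr_pXn2r ?ler_pXn2r ?nnegrE ?ler0n // le_x andbT.
by rewrite (_ : m%:Z - 1 = (m.-1)%:Z) in lt_x; last lia.
Qed.

Theorem mainTheorem8 (D : nat) (hD : (4 <= D)%N) (m : nat) :
  (m%:Z = Num.ceil (2 * sqrtC (D%:R : algC)))%R ->
  chiD2_is (star_rel D) m.
Proof.
move=> m_ceil.
have x_ge0 : 0 <= 2 * sqrtC (D%:R : algC) by rewrite mulr_ge0 ?sqrtC_ge0 ?ler0n.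
have x_sqr : (2 * sqrtC (D%:R : algC)) ^+ 2 = (4 * D)%:R.
  by rewrite exprMn sqrtCK natrM -natrX.
have n_gt0 : (0 < 4 * D)%N by lia.
have /andP[lt_m le_m] := ceil_sqrt_bounds x_ge0 x_sqr n_gt0 m_ceil.
split=> [|k /(star_D2_colourable_leq_sqr hD) le_k].
  rewrite -[m]half_add_uphalf; apply: star_D2_colourable_of_leq_mul; first by lia.
  exact: leq_half_mul_uphalf.
have : (m.-1 < k)%N by rewrite -ltn_sqr; lia.
lia.
Qed.
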